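(* Let $L>0$ and assume there are continuous functions $f:[-L,L]\times[0,\infty)\to\mathbb{R}$, $g:[0,\infty)\to\mathbb{R}$ and a constant $K>0$ such that (i) $g(0)>0$, $g$ is strictly increasing, and with $G(s):=\int_K^sg(t)\,dt$ one has $\lim_{s\to\infty}s/\sqrt{G(s)}=0$; (ii) $f(x,s)\ge g(s)$ for all $s\ge K$, $x\in[-L,L]$. Let $\lambda_0=(\pi/L)^2$. Then: (a) there exists $A>0$ such that $f(x,s)\ge\lambda_0s-A$ for all $s\ge0$ and all $x\in[-L,L]$; (b) for every $R>K$, $$\int_0^R\frac{ds}{\sqrt{G(R)-G(s)}}\le\frac{2R}{\sqrt{G(R)}}.$$ *)

From HB Require Import structures.
From mathcomp Require Import all_boot all_order all_algebra.
From mathcomp Require Import all_classical all_reals all_analysis.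
Set Implicit Arguments. Unset Strict Implicit. Unset Printing Implicit Defensive.
Import Order.TTheory GRing.Theory Num.Theory.
Import numFieldNormedType.Exports.
Local Open Scope classical_set_scope.
Local Open Scope ring_scope.

Definition primK (R : realType) (g : R -> R) (K s : R) : R :=
  if K <= s then Rintegral lebesgue_measure `[K, s] g
  else - Rintegral lebesgue_measure `[s, K] g.

From HB Require Import structures.
From mathcomp Require Import all_boot all_order all_algebra.
From mathcomp Require Import all_classical all_reals all_analysis.
From mathcomp Require Import ring lra measurable_realfun.
Import Order.TTheory GRing.Theory Num.Theory.
Import numFieldNormedType.Exports.
Local Open Scope classical_set_scope.
Local Open Scope ring_scope.

(* (a) On the compact box [-L, L] x [0, K] the continuous f is bounded below.
   Beyond K we have f >= g, and g grows superlinearly: G(s) <= s g(s) since g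
   is nondecreasing, while s^2 = o(G(s)); hence g(s) >= lambda_0 s eventually.

   (b) As g is nondecreasing, its mean over [s, R] is at least its mean over
   [0, R], which is at least G(R)/R.  Thus G(R) - G(s) >= (R - s) G(R) / R, so
   the integrand is at most sqrt(R / G(R)) (R - s)^(-1/2), whose integral over
   [0, R] is 2 sqrt R * sqrt(R / G(R)) = 2 R / sqrt(G(R)). *)

Lemma inv_sqrt_le_of_mul_le {R : rcfType} (a b c d : R) :
  0 < a -> 0 < b -> 0 <= c -> a * b <= c * d ->
  (Num.sqrt d)^-1 <= Num.sqrt c / Num.sqrt b * (Num.sqrt a)^-1.
Proof.
move=> a0 b0 c0 abcd.
have d0 : 0 < d by nra.
have sqrt_le : Num.sqrt a * Num.sqrt b <= Num.sqrt c * Num.sqrt d.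
  rewrite -sqrtrM ?(ltW a0) // -sqrtrM //.
  by rewrite ler_sqrt // mulr_ge0 // ltW.
rewrite -mulrA -invfM ler_pdivlMr ?mulr_gt0 ?sqrtr_gt0 //.
by rewrite mulrC ler_pdivrMr ?sqrtr_gt0 // [X in X <= _]mulrC.
Qed.

Lemma continuous_compact_lbound {T : topologicalType} {R : realType}
    {F : T -> R} {A : set T} :
  compact A -> {within A, continuous F} -> exists B, forall p, A p -> - B <= F p.
Proof.
move=> cA cF; have [M [_ HM]] := compact_bounded (continuous_compact cF cA).
exists (M + 1) => p Ap; rewrite lerNl; apply: le_trans (ler_norm _) _.
by rewrite normrN; apply: HM (imageP F Ap); rewrite ltrDl.
Qed.

Lemma superlinear_of_sqrt_ratio_cvg0 {R : realType} {G g : R -> R} (lam : R) :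
  (fun s => s / Num.sqrt (G s)) x @[x --> +oo] --> 0 ->
  (\forall s \near +oo, 0 < G s <= s * g s) ->
  \forall s \near +oo, lam * s <= g s.
Proof.
move=> ratio0 Gg; set c := `|lam| + 1.
have c0 : 0 < c by rewrite ltr_wpDl.
have ratio_small : \forall s \near +oo, s / Num.sqrt (G s) < c^-1.
  move/cvgrPdist_lt : ratio0 => /(_ c^-1); rewrite invr_gt0 => /(_ c0); apply: filterS => s.
  by rewrite sub0r normrN; apply: le_lt_trans; exact: ler_norm.
near=> s.
have /andP[G0 Gle] : 0 < G s <= s * g s by near: s.
have s0 : 0 < s by near: s; exact: nbhs_pinfty_gt.
have : s / Num.sqrt (G s) < c^-1 by near: s.
rewrite ltr_pdivrMr ?sqrtr_gt0 // ltr_pdivlMl // => cs_lt.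
have cs_G : (c * s) ^+ 2 < G s.
  by rewrite -(sqr_sqrtr (ltW G0)) ltrXn2r ?nnegrE ?mulr_ge0 ?sqrtr_ge0 ?ltW.
have c2s_g : c ^+ 2 * s < g s.
  rewrite -(ltr_pM2l s0) (_ : s * _ = (c * s) ^+ 2); last by ring.
  exact: lt_le_trans cs_G Gle.
have : lam * s <= c * s by rewrite ler_pM2r // ler_wpDr // real_ler_norm ?num_real.
have c1 : 1 <= c by rewrite lerDr.
have cs0 : 0 <= c * s by rewrite mulr_ge0 ?ltW.
nra.
Unshelve. all: by end_near.
Qed.

Section segment_Rintegral.
Context {R : realType}.
Local Notation mu := (@lebesgue_measure R).
Implicit Types (a b c : R) (g : R -> R).

Lemma Rintegral_itv_cst a b c : a <= b -> Rintegral mu `[a, b] (cst c) = (b - a) * c.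
Proof.
move=> ab; rewrite Rintegral_cst // mulrC; congr (_ * _).
have : fine (lebesgue_measure `[a, b]) = b - a.
  rewrite lebesgue_measure_itv /= lte_fin.
  by case: ltgtP ab => // ->; rewrite subrr.
exact.
Qed.

Lemma continuous_itv_integrable g a b : {within `[a, b], continuous g} ->
  mu.-integrable `[a, b] (EFin \o g).
Proof. by move=> cg; apply: continuous_compact_integrable => //; exact: segment_compact. Qed.

Lemma Rintegral_itv_split g a b c : a <= b -> b <= c ->
  mu.-integrable `[a, c] (EFin \o g) ->
  Rintegral mu `[a, c] g = Rintegral mu `[a, b] g + Rintegral mu `[b, c] g.
Proof.
move=> ab bc ig.
have := @Rintegral_itvB R g (BLeft a) (BRight c) b ig.
rewrite !bnd_simp => /(_ ab bc) split_ac.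
rewrite -(@Rintegral_itv_obnd_cbnd R b (BRight c)) -?split_ac 1?addrC ?subrK //.
by apply: integrableS ig => //; apply: subset_itv; rewrite bnd_simp.
Qed.

Lemma Rintegral_itv_ge g a b c : a <= b -> {within `[a, b], continuous g} ->
  (forall x, a <= x <= b -> c <= g x) -> (b - a) * c <= Rintegral mu `[a, b] g.
Proof.
move=> ab cg gc; rewrite -Rintegral_itv_cst //.
apply: le_Rintegral => //.
- by apply/continuous_itv_integrable/continuous_subspaceT; exact: cst_continuous.
- exact: continuous_itv_integrable.
Qed.

Lemma Rintegral_itv_le g a b c : a <= b -> {within `[a, b], continuous g} ->
  (forall x, a <= x <= b -> g x <= c) -> Rintegral mu `[a, b] g <= (b - a) * c.
Proof.
move=> ab cg gc; rewrite -Rintegral_itv_cst //.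
apply: le_Rintegral => //.
- exact: continuous_itv_integrable.
- by apply/continuous_itv_integrable/continuous_subspaceT; exact: cst_continuous.
Qed.
End segment_Rintegral.

Section inverse_sqrt_integral.
Context {R : realType}.
Local Notation mu := (@lebesgue_measure R).

Lemma itvcoEbigcup (a b : R) :
  `[a, b[%classic = \bigcup_k `[a, b - k.+1%:R^-1]%classic.
Proof.
apply/seteqP; split=> [x|x [k _]] /=; rewrite !in_itv /=.
  move=> /andP[ax /ltr_add_invr[k xk]]; exists k => //=.
  by rewrite in_itv /= ax lerBrDr ltW.
move=> /andP[-> xk]; apply: le_lt_trans xk _.
by rewrite ltrBlDr ltrDl invr_gt0 ltr0n.
Qed.

Lemma measurable_fun_inv_sqrt (D : set R) (u : R -> R) :
  measurable_fun D u -> (forall x, D x -> 0 <= u x) ->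
  measurable_fun D (fun x => (Num.sqrt (u x))^-1).
Proof.
move=> mu0 u0; apply: (@eq_measurable_fun _ _ _ _ D (fun x => u x `^ (- 2^-1))).
  by move=> x /set_mem /u0 ux0; rewrite powRN powR12_sqrt.
exact: measurableT_comp (measurable_powR _) mu0.
Qed.

Lemma is_derive_sqrt_sub {t x : R} : x < t ->
  is_derive x 1 ((-2) \*: (Num.sqrt \o (fun y => t - y))) (Num.sqrt (t - x))^-1.
Proof.
move=> xt.
have dsub : is_derive x 1 (fun y : R => t - y) (-1).
  by have := @is_deriveB R R R (cst t) id x 1 0 1 _ _; rewrite sub0r; apply.
have tx : 0 < t - x by rewrite subr_gt0.
have := @is_derive1_comp R Num.sqrt (fun y => t - y) x _ _ (is_derive1_sqrt tx) dsub.
move=> /(is_deriveZ (-2)) /is_derive_eq; apply.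
rewrite [LHS]/GRing.scale /=; field.
by rewrite sqrtr_eq0 -ltNge subr_gt0.
Qed.

Lemma continuous_inv_sqrt_sub (t x : R) : x < t ->
  {for x, continuous (fun y => (Num.sqrt (t - y))^-1)}.
Proof.
move=> xt; apply: continuousV; first by rewrite sqrtr_eq0 -ltNge subr_gt0.
apply: (@continuous_comp _ _ _ (fun y : R => t - y) Num.sqrt).
  by apply: continuousB; [exact: cst_continuous | exact: cvg_id].
exact: sqrt_continuous.
Qed.

Lemma integral_inv_sqrt_sub (a b t : R) : a < b -> b < t ->
  (\int[mu]_(x in `[a, b]) ((Num.sqrt (t - x))^-1)%:E
    = (2 * Num.sqrt (t - a) - 2 * Num.sqrt (t - b))%:E)%E.
Proof.
move=> ab bt.
have cont x : x < t -> {for x, continuous ((-2) \*: (Num.sqrt \o (fun y => t - y)))}.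
  move=> xt; have [dF _] := is_derive_sqrt_sub xt.
  by apply/differentiable_continuous; rewrite -derivable1_diffP.
rewrite (@continuous_FTC2 R (fun x => (Num.sqrt (t - x))^-1)
  ((-2) \*: (Num.sqrt \o (fun y => t - y))) a b ab).
- by rewrite -EFinB /= /GRing.scale /=; congr EFin; ring.
- apply: continuous_in_subspaceT => x; rewrite inE /= in_itv /= => /andP[_ xb].
  exact/continuous_inv_sqrt_sub/(le_lt_trans xb).
- split.
  + move=> x; rewrite in_itv /= => /andP[_ xb].
    by have [] := is_derive_sqrt_sub (lt_trans xb bt).
  + exact/cvg_at_right_filter/cont/(lt_trans ab bt).
  + exact/cvg_at_left_filter/cont/bt.
- move=> x; rewrite in_itv /= => /andP[_ xb].
  by rewrite derive1E; have [_ ->] := is_derive_sqrt_sub (lt_trans xb bt).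
Qed.

Lemma integral_inv_sqrt_sub_le {a t : R} : a < t ->
  (\int[mu]_(x in `[a, t[) ((Num.sqrt (t - x))^-1)%:E
    <= (2 * Num.sqrt (t - a))%:E)%E.
Proof.
move=> lt_at.
pose F k := `[a, t - k.+1%:R^-1]%classic.
have F_le k x : F k x -> x < t.
  rewrite /F /= in_itv /= => /andP[_ /le_lt_trans]; apply.
  by rewrite ltrBlDr ltrDl invr_gt0 ltr0n.
have F_nd : nondecreasing_seq F.
  move=> m n mn; apply/subsetPset => x; rewrite /F /= !in_itv /=.
  move=> /andP[-> /le_trans]; apply; rewrite lerB // lef_pV2 ?posrE ?ltr0n //.
  by rewrite ler_nat ltnS.
have mh k : measurable_fun (F k) (EFin \o fun x => (Num.sqrt (t - x))^-1).
  apply/measurable_EFinP; apply: measurable_fun_inv_sqrt.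
    exact: measurable_funB.
  by move=> x /F_le; rewrite subr_ge0 => /ltW.
have cvgF := ge0_nondecreasing_set_cvg_integral (mu := mu) F_nd
  (fun k => measurable_itv _) mh (fun k x _ => ltac:(by rewrite lee_fin invr_ge0 sqrtr_ge0)).
rewrite itvcoEbigcup -(cvg_lim _ cvgF) //; apply: lime_le; first exact: cvgP cvgF.
have tpos : 0 < t - a by rewrite subr_gt0.
near=> k.
have ak : a < t - k.+1%:R^-1.
  rewrite ltrBrDl -ltrBrDr; near: k; exact: (near_infty_natSinv_lt (PosNum tpos)).
rewrite integral_inv_sqrt_sub //; last by rewrite ltrBlDr ltrDl invr_gt0 ltr0n.
by rewrite lee_fin lerBlDr lerDl mulr_ge0 ?sqrtr_ge0.
Unshelve. all: by end_near.
Qed.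
End inverse_sqrt_integral.

Section positive_nondecreasing_integrand.
Context {R : realType} {g : R -> R}.
Local Notation mu := (@lebesgue_measure R).
Hypothesis g_cont : {within `[0, +oo[, continuous g}.
Hypothesis g_gt0 : forall s, 0 <= s -> 0 < g s.
Hypothesis g_nd : forall s t, 0 <= s -> s <= t -> g s <= g t.

Local Notation I a b := (Rintegral mu `[a, b] g).

Let g_cont_itv a b : 0 <= a -> {within `[a, b], continuous g}.
Proof.
move=> a0; apply: continuous_subspaceW g_cont => x /=.
by rewrite !in_itv /= => /andP[/(le_trans a0) ->].
Qed.

Let g_integrable a b : 0 <= a -> mu.-integrable `[a, b] (EFin \o g).
Proof. by move=> a0; exact/continuous_itv_integrable/g_cont_itv. Qed.

Lemma Rintegral_ge_left {a b} : 0 <= a -> a <= b -> (b - a) * g a <= I a b.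
Proof.
move=> a0 ab; apply: Rintegral_itv_ge => //; first exact: g_cont_itv.
by move=> x /andP[ax _]; exact: g_nd.
Qed.

Lemma Rintegral_le_right {a b} : 0 <= a -> a <= b -> I a b <= (b - a) * g b.
Proof.
move=> a0 ab; apply: Rintegral_itv_le => //; first exact: g_cont_itv.
by move=> x /andP[ax xb]; apply: g_nd => //; exact: le_trans ax.
Qed.

Lemma Rintegral_ge0 a b : 0 <= a -> 0 <= I a b.
Proof.
move=> a0; have [ab|ba] := leP a b.
  apply: le_trans _ (Rintegral_ge_left a0 ab).
  by rewrite mulr_ge0 ?subr_ge0 // ltW ?g_gt0.
by rewrite set_itv_ge ?Rintegral_set0 // bnd_simp -ltNge.
Qed.

Lemma Rintegral_split {a b c} : 0 <= a -> a <= b -> b <= c -> I a c = I a b + I b c.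
Proof. by move=> a0 ab bc; apply: Rintegral_itv_split => //; exact: g_integrable. Qed.

Lemma Rintegral_sub0 {a b} : 0 <= a -> a <= b -> I a b = I 0 b - I 0 a.
Proof. by move=> a0 ab; rewrite (Rintegral_split (lexx 0) a0 ab) addrC addKr. Qed.

Lemma nondecreasing_Rintegral0 : nondecreasing_fun (fun s => I 0 s).
Proof.
move=> s t st /=; have [s0|s0] := ltP s 0.
  by rewrite set_itv_ge ?Rintegral_set0 ?Rintegral_ge0 // bnd_simp -ltNge.
by rewrite (Rintegral_split (lexx 0) s0 st) lerDl Rintegral_ge0.
Qed.

Context {K : R}.
Hypothesis K_ge0 : 0 <= K.

Lemma primK_ge {s : R} : K <= s -> primK g K s = I K s.
Proof. by rewrite /primK => ->. Qed.

Lemma primK_sub {s t : R} : 0 <= s -> s <= t -> primK g K t - primK g K s = I s t.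
Proof.
move=> s0 st; rewrite /primK.
have [Ks|sK] := leP K s.
  by rewrite (le_trans Ks st) (Rintegral_split K_ge0 Ks st); ring.
have [Kt|tK] := leP K t.
  by rewrite (Rintegral_split s0 (ltW sK) Kt); ring.
by rewrite (Rintegral_split s0 st (ltW tK)); ring.
Qed.

Lemma primK_gt0 {s : R} : K < s -> 0 < primK g K s.
Proof.
move=> Ks; rewrite primK_ge ?ltW //; apply: lt_le_trans _ (Rintegral_ge_left K_ge0 (ltW Ks)).
by rewrite mulr_gt0 ?subr_gt0 ?g_gt0.
Qed.

Lemma primK_le_mul {s : R} : K <= s -> primK g K s <= s * g s.
Proof.
move=> Ks; rewrite primK_ge //; apply: le_trans (Rintegral_le_right K_ge0 Ks) _.
by rewrite ler_wpM2r ?gerBl // ltW ?g_gt0 // (le_trans K_ge0).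
Qed.

Lemma primK_chord {s t : R} : K <= t -> 0 <= s -> s <= t ->
  (t - s) * primK g K t <= t * (primK g K t - primK g K s).
Proof.
move=> Kt s0 st; rewrite primK_sub //.
have Kt_le : primK g K t <= I 0 s + I s t.
  rewrite -Rintegral_split // primK_ge // (Rintegral_split (lexx 0) K_ge0 Kt).
  by rewrite lerDr Rintegral_ge0.
have lo := Rintegral_ge_left s0 st.
have hi := Rintegral_le_right (lexx 0) s0.
have ts : 0 <= t - s by rewrite subr_ge0.
rewrite subr0 in hi; nra.
Qed.

Lemma integral_inv_sqrt_primK_le {t : R} : K < t ->
  (\int[lebesgue_measure]_(s in `[0%R, t])
      ((Num.sqrt (primK g K t - primK g K s))^-1)%:E
    <= (2 * t / Num.sqrt (primK g K t))%:E)%E.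
Proof.
move=> Kt; have t0 : 0 < t := le_lt_trans K_ge0 Kt.
set G := primK g K t; have G0 : 0 < G := primK_gt0 Kt.
set c := Num.sqrt t / Num.sqrt G.
have c0 : 0 <= c by rewrite divr_ge0 ?sqrtr_ge0.
have in_D s : `[0, t[%classic s -> 0 <= s /\ s < t.
  by rewrite /= in_itv /= => /andP[].
have meas_phi : measurable_fun `[0, t[
    (fun s => (Num.sqrt (G - primK g K s))^-1).
  apply: measurable_fun_inv_sqrt => [|s /in_D[s0 st]]; last first.
    by rewrite primK_sub ?Rintegral_ge0 // ltW.
  pose J s := I 0 t - I 0 s.
  have meas_I : measurable_fun `[0%R, t[ J.
    apply: measurable_funB; first exact: measurable_cst.
    by apply: nondecreasing_measurable => //; exact: nondecreasing_Rintegral0.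
  apply: eq_measurable_fun meas_I => s /set_mem /in_D[s0 /ltW st].
  by rewrite /J primK_sub // (Rintegral_sub0 s0 st).
have meas_h : measurable_fun `[0, t[ (fun s => (Num.sqrt (t - s))^-1).
  apply: measurable_fun_inv_sqrt => [|s /in_D[_ /ltW]]; last by rewrite subr_ge0.
  exact: measurable_funB.
rewrite -integral_itv_bndo_bndc; last exact/measurable_EFinP.
apply: (@le_trans _ _ (\int[mu]_(s in `[0%R, t[) (c * (Num.sqrt (t - s))^-1)%:E)%E).
  apply: ge0_le_integral => //.
  - exact/measurable_EFinP.
  - by apply/measurable_EFinP/measurable_funM => //; exact: measurable_cst.
  move=> s /in_D[s0 st]; rewrite lee_fin; apply: inv_sqrt_le_of_mul_le.
  - by rewrite subr_gt0.
  - exact: G0.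
  - exact: ltW.
  - exact: primK_chord (ltW Kt) s0 (ltW st).
under eq_integral do rewrite EFinM.
rewrite ge0_integralZl_EFin //; last exact/measurable_EFinP.
apply: le_trans (lee_wpmul2l _ (integral_inv_sqrt_sub_le t0)) _.
  by rewrite lee_fin.
rewrite -EFinM lee_fin subr0 le_eqVlt; apply/orP; left; apply/eqP.
by rewrite /c -[in RHS](sqr_sqrtr (ltW t0)); ring.
Qed.
End positive_nondecreasing_integrand.

Lemma exists_affine_lbound {R : realType} (X : set R) {f : R -> R -> R}
    {g : R -> R} {K B S lam : R} : 0 <= lam ->
  (forall x s, X x -> 0 <= s <= K -> - B <= f x s) ->
  (forall x s, X x -> K <= s -> g s <= f x s) ->
  (forall s, K <= s -> 0 <= g s) ->
  (forall s, S < s -> lam * s <= g s) ->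
  exists A, 0 < A /\ forall x s, X x -> 0 <= s -> lam * s - A <= f x s.
Proof.
move=> lam0 fB fg g0 gS.
have nKB := ler_norm (lam * K + B); have nS := ler_norm (lam * S).
have nKB0 := normr_ge0 (lam * K + B); have nS0 := normr_ge0 (lam * S).
exists (1 + `|lam * K + B| + `|lam * S|); split => [|x s Xx s0]; first lra.
have [sK|Ks] := leP s K.
  have := fB x s Xx; rewrite s0 sK => /(_ isT).
  have : lam * s <= lam * K by rewrite ler_wpM2l.
  lra.
have := fg x s Xx (ltW Ks); have [sS|Ss] := leP s S.
  have : lam * s <= lam * S by rewrite ler_wpM2l.
  have := g0 s (ltW Ks); lra.
have := gS s Ss; lra.
Qed.

Theorem mainTheorem12 (R : realType) (L K : R) (f : R -> R -> R) (g : R -> R)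
  (hL : 0 < L) (hK : 0 < K)
  (hf : {within [set p : R * R | (- L <= p.1 <= L) /\ 0 <= p.2],
          continuous (fun p : R * R => f p.1 p.2)})
  (hg : {within `[0, +oo[, continuous g})
  (hg0 : 0 < g 0)
  (hginc : forall s t : R, 0 <= s -> s < t -> g s < g t)
  (hG : (fun s : R => s / Num.sqrt (primK g K s)) x @[x --> +oo] --> 0)
  (hfg : forall x s : R, - L <= x <= L -> K <= s -> g s <= f x s) :
  (exists A : R, 0 < A /\
     forall x s : R, - L <= x <= L -> 0 <= s ->
       (pi / L) ^+ 2 * s - A <= f x s)
  /\
  (forall Rr : R, K < Rr ->
     (\int[lebesgue_measure]_(s in `[0%R, Rr])
        ((Num.sqrt (primK g K Rr - primK g K s))^-1)%:E
      <= (2 * Rr / Num.sqrt (primK g K Rr))%:E)%E).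
Proof.
have g_nd s t : 0 <= s -> s <= t -> g s <= g t.
  by move=> s0; rewrite le_eqVlt => /predU1P[->//|/(hginc _ _ s0)/ltW].
have g_gt0 s : 0 <= s -> 0 < g s.
  by move=> s0; apply: lt_le_trans hg0 (g_nd _ _ (lexx 0) s0).
(* Plain [exact]: the two integrals agree only up to unfolding of structure instances. *)
split; last by move=> t Kt; exact (integral_inv_sqrt_primK_le hg g_gt0 g_nd (ltW hK) Kt).
have [B fB] : exists B, forall x s, - L <= x <= L -> 0 <= s <= K -> - B <= f x s.
  have box_compact : compact (`[- L, L] `*` `[0, K]).
    by apply: compact_setX; exact: segment_compact.
  have box_sub : `[- L, L] `*` `[0, K] `<=`
      [set p : R * R | (- L <= p.1 <= L) /\ 0 <= p.2].
    by move=> [x s] [] /=; rewrite !in_itv /= => -> /andP[].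
  have [B boxB] := continuous_compact_lbound box_compact (continuous_subspaceW box_sub hf).
  by exists B => x s hx hs; apply: (boxB (x, s)); split; rewrite /= in_itv.
have G_ratio : \forall s \near +oo, 0 < primK g K s <= s * g s.
  near=> s; have Ks : K < s by near: s; apply: nbhs_pinfty_gt; exact: num_real.
  by rewrite (primK_gt0 hg g_gt0 g_nd (ltW hK) Ks) primK_le_mul ?ltW.
have [S [_ gS]] := superlinear_of_sqrt_ratio_cvg0 ((pi / L) ^+ 2) hG G_ratio.
apply: (exists_affine_lbound [set x | - L <= x <= L]) fB hfg _ gS => //.
  by rewrite sqr_ge0.
by move=> s Ks; rewrite ltW // g_gt0 // (le_trans (ltW hK)).
Unshelve. all: by end_near.
Qed.
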